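(* Let $\mathbb{C}$ be a locally small category and $\mathbb{C}_{\mathit{fin}}$ a full subcategory satisfying (C1)–(C5) below. Let $F\in\mathrm{Ob}(\mathbb{C})$ be a locally finite object whose automorphisms are finitely separated. Then $\mathrm{Aut}(F)$ endowed with the topology $\tau_F$ is a Hausdorff topological group.
   Context: Write $A\to B$ if $\hom(A,B)\ne\varnothing$. Conditions: (C1) all morphisms of $\mathbb{C}$ are monomorphisms; (C2) $\mathrm{Ob}(\mathbb{C}_{\mathit{fin}})$ is a set; (C3) $\hom(A,B)$ is finite for $A,B\in\mathrm{Ob}(\mathbb{C}_{\mathit{fin}})$; (C4) for every $F\in\mathrm{Ob}(\mathbb{C})$ there is $A\in\mathrm{Ob}(\mathbb{C}_{\mathit{fin}})$ with $A\to F$; (C5) for every $B\in\mathrm{Ob}(\mathbb{C}_{\mathit{fin}})$ the set $\{A\in\mathrm{Ob}(\mathbb{C}_{\mathit{fin}}):A\to B\}$ is finite. $F$ is locally finite if for all $A,B\in\mathrm{Ob}(\mathbb{C}_{\mathit{fin}})$, $e\in\hom(A,F)$, $f\in\hom(B,F)$ there exist $D\in\mathrm{Ob}(\mathbb{C}_{\mathit{fin}})$, $r\in\hom(D,F)$, $p\in\hom(A,D)$, $q\in\hom(B,D)$ with $r\cdot p=e$, $r\cdot q=f$, such that for every $H\in\mathrm{Ob}(\mathbb{C})$, $r'\in\hom(H,F)$, $p'\in\hom(A,H)$, $q'\in\hom(B,H)$ with $r'\cdot p'=e$, $r'\cdot q'=f$ there is $s\in\hom(D,H)$ with $r'\cdot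 s=r$, $s\cdot p=p'$, $s\cdot q=q'$. The automorphisms of $F$ are finitely separated if for all $f\ne g$ in $\mathrm{Aut}(F)$ there are $A\in\mathrm{Ob}(\mathbb{C}_{\mathit{fin}})$ and $e\in\hom(A,F)$ with $f\cdot e\ne g\cdot e$. $\tau_F$ is the topology on $\mathrm{Aut}(F)$ having as a base the sets $N_F(e_1,e_2)=\{f\in\mathrm{Aut}(F):f\cdot e_1=e_2\}$, $A\in\mathrm{Ob}(\mathbb{C}_{\mathit{fin}})$, $A\to F$, $e_1,e_2\in\hom(A,F)$. *)

From Stdlib Require Import List.
Set Implicit Arguments.
Unset Strict Implicit.

Record Category := {
  Ob : Type;
  hom : Ob -> Ob -> Type;
  idm : forall A, hom A A;
  comp : forall A B C, hom B C -> hom A B -> hom A C;  (* comp g f = g . f *)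
  comp_assoc : forall A B C D (h : hom C D) (g : hom B C) (f : hom A B),
      comp h (comp g f) = comp (comp h g) f;
  comp_id_l : forall A B (f : hom A B), comp (idm B) f = f;
  comp_id_r : forall A B (f : hom A B), comp f (idm A) = f
}.

Arguments idm {c} A.
Arguments comp {c A B C} _ _.
Arguments hom {c} _ _.

Section Defs.
Variable C : Category.
(* the full subcategory C_fin is given by a predicate on objects *)
Variable fin : Ob C -> Prop.

Definition arrow (A B : Ob C) : Prop := inhabited (hom A B).

Definition C1 : Prop :=
  forall (A B : Ob C) (f : hom A B) (X : Ob C) (g h : hom X A),
    comp f g = comp f h -> g = h.

Definition C3 : Prop :=
  forall A B : Ob C, fin A -> fin B ->
    exists l : list (hom A B), forall f : hom A B, In f l.

Definition C4 : Prop :=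
  forall F : Ob C, exists A : Ob C, fin A /\ arrow A F.

Definition C5 : Prop :=
  forall B : Ob C, fin B ->
    exists l : list (Ob C), forall A : Ob C, fin A -> arrow A B -> In A l.

Definition locally_finite (F : Ob C) : Prop :=
  forall (A B : Ob C), fin A -> fin B ->
  forall (e : hom A F) (f : hom B F),
  exists (D : Ob C) (r : hom D F) (p : hom A D) (q : hom B D),
    fin D /\ comp r p = e /\ comp r q = f /\
    forall (H : Ob C) (r' : hom H F) (p' : hom A H) (q' : hom B H),
      comp r' p' = e -> comp r' q' = f ->
      exists s : hom D H, comp r' s = r /\ comp s p = p' /\ comp s q = q'.

Definition inverse_of (F : Ob C) (g f : hom F F) : Prop :=
  comp g f = idm F /\ comp f g = idm F.

Definition is_aut (F : Ob C) (f : hom F F) : Prop :=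
  exists g : hom F F, inverse_of g f.

Definition aut_finitely_separated (F : Ob C) : Prop :=
  forall f g : hom F F, is_aut f -> is_aut g -> f <> g ->
    exists (A : Ob C) (e : hom A F), fin A /\ comp f e <> comp g e.

Definition N_F (F A : Ob C) (e1 e2 : hom A F) : hom F F -> Prop :=
  fun f => is_aut f /\ comp f e1 = e2.

Definition tau_basic (F : Ob C) (U : hom F F -> Prop) : Prop :=
  exists (A : Ob C) (e1 e2 : hom A F),
    fin A /\ arrow A F /\ forall f, U f <-> N_F e1 e2 f.

Definition tau_open (F : Ob C) (U : hom F F -> Prop) : Prop :=
  (forall f, U f -> is_aut f) /\
  forall f : hom F F, U f -> exists B, tau_basic B /\ B f /\ forall g, B g -> U g.

Definition tau_is_base (F : Ob C) : Prop :=
  (forall f : hom F F, is_aut f -> exists B, tau_basic B /\ B f) /\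
  (forall (B1 B2 : hom F F -> Prop) (f : hom F F), tau_basic B1 -> tau_basic B2 -> B1 f -> B2 f ->
     exists B3, tau_basic B3 /\ B3 f /\ forall g, B3 g -> B1 g /\ B2 g).

Definition comp_continuous (F : Ob C) : Prop :=
  forall (f g : hom F F) (W : hom F F -> Prop),
    is_aut f -> is_aut g -> tau_open W -> W (comp f g) ->
    exists U V, tau_open U /\ tau_open V /\ U f /\ V g /\
      forall u v, U u -> V v -> W (comp u v).

Definition inv_continuous (F : Ob C) : Prop :=
  forall W : hom F F -> Prop, tau_open W ->
    tau_open (fun f : hom F F => is_aut f /\ exists g : hom F F, inverse_of g f /\ W g).

Definition tau_hausdorff (F : Ob C) : Prop :=
  forall f g : hom F F, is_aut f -> is_aut g -> f <> g ->
    exists U V, tau_open U /\ tau_open V /\ U f /\ V g /\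
      forall h : hom F F, ~ (U h /\ V h).

Definition hausdorff_topological_group_Aut (F : Ob C) : Prop :=
  tau_is_base F /\ comp_continuous F /\ inv_continuous F /\ tau_hausdorff F.

End Defs.

Set Implicit Arguments.
Unset Strict Implicit.

(* A basic set N(e1, e2) is a coset of the pointwise stabiliser of the finite
   object A embedded by e1.  Composition and inversion move such cosets to
   cosets of the same kind, so both operations are continuous.  Two basic
   neighbourhoods of f, over A and B, contain the one over an object D into
   which A and B embed jointly; such a D exists because F is locally finite.
   Finite separation provides, for f <> g, some e with f e <> g e, and then
   N(e, f e) and N(e, g e) are disjoint. *)

Section AutTopology.

Variable C : Category.
Variable fin : Ob C -> Prop.
Variable F : Ob C.

Lemma is_aut_comp (u v : hom F F) : is_aut u -> is_aut v -> is_aut (comp u v).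
Proof.
  intros [u' [Hu'u Huu']] [v' [Hv'v Hvv']].
  exists (comp v' u'); split.
  - rewrite comp_assoc, <- (comp_assoc v'), Hu'u, comp_id_r; exact Hv'v.
  - rewrite comp_assoc, <- (comp_assoc u), Hvv', comp_id_r; exact Huu'.
Qed.

Lemma is_aut_inverse (f g : hom F F) : inverse_of g f -> is_aut g.
Proof. intros [Hgf Hfg]; exists f; split; assumption. Qed.

Lemma N_F_basic (A : Ob C) (e1 e2 : hom A F) : fin A -> tau_basic fin (N_F e1 e2).
Proof.
  intros HA; exists A, e1, e2; split; [exact HA |].
  split; [exact (inhabits e1) | tauto].
Qed.

Lemma N_F_open (A : Ob C) (e1 e2 : hom A F) : fin A -> tau_open fin (N_F e1 e2).
Proof.
  intros HA; split.
  - intros f [Hf _]; exact Hf.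
  - intros f Hf; exists (N_F e1 e2); split; [apply N_F_basic; exact HA | auto].
Qed.

Lemma N_F_self (A : Ob C) (e : hom A F) (f : hom F F) :
  is_aut f -> N_F e (comp f e) f.
Proof. intros Hf; split; [exact Hf | reflexivity]. Qed.

Lemma tau_open_nbhd (W : hom F F -> Prop) (f : hom F F) :
  tau_open fin W -> W f ->
  exists (A : Ob C) (e1 e2 : hom A F),
    fin A /\ N_F e1 e2 f /\ forall g, N_F e1 e2 g -> W g.
Proof.
  intros [_ HW] Hf.
  destruct (HW f Hf) as [B [[A [e1 [e2 [HA [_ HB]]]]] [HBf HBW]]].
  exists A, e1, e2; split; [exact HA |]; split.
  - apply HB; exact HBf.
  - intros g Hg; apply HBW, HB; exact Hg.
Qed.

Lemma N_F_factor (A D : Ob C) (e1 e2 : hom A F) (r : hom D F) (p : hom A D)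
  (f g : hom F F) :
  comp r p = e1 -> N_F e1 e2 f -> N_F r (comp f r) g -> N_F e1 e2 g.
Proof.
  intros Hp [_ Hf] [Hg Hgr]; split; [exact Hg |].
  rewrite <- Hf, <- Hp, !comp_assoc, Hgr; reflexivity.
Qed.

Lemma tau_basic_cover : C4 fin ->
  forall f : hom F F, is_aut f -> exists B, tau_basic fin B /\ B f.
Proof.
  intros H4 f Hf.
  destruct (H4 F) as [A [HA [e]]].
  exists (N_F e (comp f e)); split; [apply N_F_basic; exact HA | apply N_F_self; exact Hf].
Qed.

Lemma tau_basic_inter : locally_finite fin F ->
  forall (B1 B2 : hom F F -> Prop) (f : hom F F),
    tau_basic fin B1 -> tau_basic fin B2 -> B1 f -> B2 f ->
    exists B3, tau_basic fin B3 /\ B3 f /\ forall g, B3 g -> B1 g /\ B2 g.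
Proof.
  intros Hlf B1 B2 f [A [e1 [e2 [HA [_ HB1]]]]] [B [e1' [e2' [HB [_ HB2]]]]] Hf1 Hf2.
  apply HB1 in Hf1; apply HB2 in Hf2.
  destruct (Hlf A B HA HB e1 e1') as [D [r [p [q [HD [Hp [Hq _]]]]]]].
  exists (N_F r (comp f r)); split; [apply N_F_basic; exact HD |]; split.
  - apply N_F_self; exact (proj1 Hf1).
  - intros g Hg; split.
    + apply HB1; exact (N_F_factor Hp Hf1 Hg).
    + apply HB2; exact (N_F_factor Hq Hf2 Hg).
Qed.

Lemma tau_comp_continuous : comp_continuous fin F.
Proof.
  intros f g W Hf Hg HW Hfg.
  destruct (tau_open_nbhd HW Hfg) as [A [e1 [e2 [HA [[_ He] HNW]]]]].
  exists (N_F (comp g e1) e2), (N_F e1 (comp g e1)).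
  split; [apply N_F_open; exact HA |]; split; [apply N_F_open; exact HA |].
  split; [split; [exact Hf | rewrite comp_assoc; exact He] |].
  split; [apply N_F_self; exact Hg |].
  intros u v [Hu Hue] [Hv Hve]; apply HNW; split.
  - apply is_aut_comp; assumption.
  - rewrite <- comp_assoc, Hve; exact Hue.
Qed.

(* The inverse image of N(e1, e2) under inversion is N(e2, e1). *)
Lemma tau_inv_continuous : inv_continuous fin F.
Proof.
  intros W HW; split.
  - intros f [Hf _]; exact Hf.
  - intros f [Hf [g [[Hgf Hfg] Hg]]].
    destruct (tau_open_nbhd HW Hg) as [A [e1 [e2 [HA [[_ He] HNW]]]]].
    exists (N_F e2 e1); split; [apply N_F_basic; exact HA |]; split.
    + split; [exact Hf |].
      rewrite <- He, comp_assoc, Hfg, comp_id_l; reflexivity.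
    + intros h [Hh Hhe]; split; [exact Hh |].
      destruct Hh as [k Hkh]; exists k; split; [exact Hkh |].
      apply HNW; split; [exact (is_aut_inverse Hkh) |].
      destruct Hkh as [Hkh _].
      rewrite <- Hhe, comp_assoc, Hkh, comp_id_l; reflexivity.
Qed.

Lemma tau_separated : aut_finitely_separated fin F -> tau_hausdorff fin F.
Proof.
  intros Hsep f g Hf Hg Hne.
  destruct (Hsep f g Hf Hg Hne) as [A [e [HA Hd]]].
  exists (N_F e (comp f e)), (N_F e (comp g e)).
  split; [apply N_F_open; exact HA |]; split; [apply N_F_open; exact HA |].
  split; [apply N_F_self; exact Hf |]; split; [apply N_F_self; exact Hg |].
  intros h [[_ Hhf] [_ Hhg]]; apply Hd; rewrite <- Hhf, <- Hhg; reflexivity.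
Qed.

End AutTopology.

Theorem lemma4p3 (C : Category) (fin : Ob C -> Prop) (F : Ob C) :
  C1 C -> C3 fin -> C4 fin -> C5 fin ->
  locally_finite fin F -> aut_finitely_separated fin F ->
  hausdorff_topological_group_Aut fin F.
Proof.
  intros _ _ H4 _ Hlf Hsep.
  split; [split |].
  - exact (tau_basic_cover H4).
  - exact (tau_basic_inter Hlf).
  - split; [apply tau_comp_continuous |].
    split; [apply tau_inv_continuous | exact (tau_separated Hsep)].
Qed.
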